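(* Let $\mathcal{D}$ be an arbitrary distribution on polygonal curves of complexity $m$ whose vertices lie in the unit Euclidean ball $B_2^d$. Let $P=\{\sigma_1,\dots,\sigma_n\}$ be an i.i.d. sample from $\mathcal{D}$ of size $n$. Then the Rademacher and Gaussian complexities for learning the median curve of complexity $m$ under DTW satisfy $\mathcal{R}(P),\mathcal{G}(P)\in\Omega\!\left(\sqrt{m^2/n}\right)$.
   Context: For curves $\sigma=(v_1,\dots,v_{m'})$, $\tau=(w_1,\dots,w_{m''})$, a traversal $T$ is a sequence of index pairs starting with $(1,1)$, ending with $(m',m'')$, each $(i,j)$ followed only by $(i+1,j)$, $(i,j+1)$ or $(i+1,j+1)$; $d_{DTW}(\sigma,\tau)=\min_T\sum_{(i,j)\in T}\|v_i-w_j\|$. Candidate median curves $\psi$ range over curves of complexity $m$ with vertices in $B_2^d$. With independent Rademacher variables $r_i$ and independent standard Gaussians $g_i$, $\mathcal{R}(P)=\mathbb{E}\sup_\psi\left|\frac1n\sum_{i=1}^n d_{DTW}(\sigma_i,\psi)r_i\right|$ and $\mathcal{G}(P)=\mathbb{E}\sup_\psi\left|\frac1n\sum_{i=1}^n d_{DTW}(\sigma_i,\psi)g_i\right|$. *)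

From HB Require Import structures.
From mathcomp Require Import all_boot all_order all_algebra.
From mathcomp Require Import all_classical all_reals all_analysis.
Set Implicit Arguments. Unset Strict Implicit. Unset Printing Implicit Defensive.
Import Order.TTheory GRing.Theory Num.Theory.
Local Open Scope classical_set_scope.
Local Open Scope ring_scope.

Section Defs.
Variable R : realType.

Definition enorm (d : nat) (v : 'rV[R]_d) : R :=
  Num.sqrt (\sum_(i < d) (v ord0 i) ^+ 2).

(* A polygonal curve of complexity m in R^d: its sequence of m vertices
   v_1, ..., v_m (indexed 0 .. m-1). *)
Definition curve (d m : nat) := 'I_m -> 'rV[R]_d.

Definition in_unit_ball (d m : nat) (s : curve d m) : Prop :=
  forall k, enorm (s k) <= 1.

Definition trav_step (m1 m2 : nat) (p q : 'I_m1 * 'I_m2) : bool :=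
  [|| (val q.1 == (val p.1).+1) && (val q.2 == val p.2),
      (val q.1 == val p.1) && (val q.2 == (val p.2).+1) |
      (val q.1 == (val p.1).+1) && (val q.2 == (val p.2).+1)].

(* The sequence x :: s of index pairs is a traversal: it starts at the first
   pair (1,1) (0-based: (0,0)), ends at (m1,m2) (0-based: (m1-1,m2-1)), and
   each pair is followed by an admissible successor. *)
Definition is_traversal (m1 m2 : nat) (x : 'I_m1 * 'I_m2) (s : seq ('I_m1 * 'I_m2)) : bool :=
  [&& val x.1 == 0%N, val x.2 == 0%N, path (@trav_step m1 m2) x s,
      val (last x s).1 == m1.-1 & val (last x s).2 == m2.-1].

Definition dtw (d m1 m2 : nat) (s : curve d m1) (t : curve d m2) : R :=
  inf [set c | exists x (T : seq ('I_m1 * 'I_m2)),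
         is_traversal x T /\ c = \sum_(p <- x :: T) enorm (s p.1 - t p.2)].

Definition sup_dev (d m n : nat) (P : 'I_n -> curve d m) (r : 'I_n -> R) : R :=
  sup [set (`| (n%:R)^-1 * \sum_(i < n) dtw (P i) psi * r i |)
        | psi in [set psi : curve d m | in_unit_ball psi]].

Definition rademacher (d m n : nat) (P : 'I_n -> curve d m) : R :=
  (2 ^+ n)^-1 * \sum_(b : {ffun 'I_n -> bool})
                  sup_dev P (fun i => if b i then 1 else -1).

(* Expectation of f(g_0, ..., g_{n-1}) for independent standard Gaussians g_i,
   written as the iterated integral against the standard normal law. *)
Fixpoint gauss_expect (n : nat) (f : (nat -> R) -> R) : R :=
  match n with
  | 0 => f (fun _ => 0)
  | k.+1 => Rintegral (normal_prob 0 1) setT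
              (fun x => gauss_expect k (fun g => f (fun i => if i == k then x else g i)))
  end.

Definition gaussian (d m n : nat) (P : 'I_n -> curve d m) : R :=
  gauss_expect n (fun g => sup_dev P (fun i => g (val i))).

End Defs.

(* Pick the constant median curve psi = e or -e (e a unit vector) for which
   sum_i dtw(sigma_i, psi) >= m n: a traversal visits every vertex v_k of
   sigma_i, so dtw(sigma_i, e) + dtw(sigma_i, -e) >= sum_k (|v_k - e| + |v_k + e|)
   >= 2 m.  With a_i = dtw(sigma_i, psi), Cauchy-Schwarz gives |a|_2 >= m sqrt n,
   and both complexities dominate E |sum_i a_i x_i| / n.  A Khintchine-type
   bound E |sum_i a_i x_i| >= c |a|_2 finishes: for signs it follows from
   |y| >= 3y^2/(4t) - y^4/(16t^3) (t = |a|_2) and the second and fourth moments,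
   for Gaussians from |y| >= t (1 - exp(-y^2/(2t^2))) and the closed form of
   the Gaussian integral of exp(-lam (b + a x)^2). *)

From HB Require Import structures.
From mathcomp Require Import all_boot all_order all_algebra.
From mathcomp Require Import all_classical all_reals all_analysis.
From mathcomp Require Import measurable_realfun.
From mathcomp Require Import ring lra.
Import Order.TTheory GRing.Theory Num.Theory.
Local Open Scope ring_scope.
Set Implicit Arguments. Unset Strict Implicit. Unset Printing Implicit Defensive.
Local Open Scope classical_set_scope.

Section integral_monotonicity.
Context d (T : measurableType d) (R : realType) (mu : measure T R).
Local Open Scope ereal_scope.

(* No measurability hypothesis: partial Gaussian expectations are not known
   to be measurable. *)
Lemma ge0_le_integralT (f h : T -> \bar R) :
  (forall x, 0 <= f x) -> (forall x, f x <= h x) ->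
  \int[mu]_x f x <= \int[mu]_x h x.
Proof.
move=> f0 fh; rewrite !ge0_integralTE //; last by move=> x; exact: le_trans (f0 x) (fh x).
apply: ereal_sup_le => _ [s sf <-]; exists s => //= x.
exact: le_trans (sf x) (fh x).
Qed.

End integral_monotonicity.

Section probability_affine.
Context d (T : measurableType d) (R : realType) (P : probability T R).
Variable f : T -> R.
Hypothesis intf : P.-integrable setT (EFin \o f).

Lemma integrable_affine (al be : R) :
  P.-integrable setT (fun x => (al + be * f x)%:E).
Proof.
have := integrableD measurableT (finite_measure_integrable_cst P al measurableT)
  (integrableZl measurableT be intf).
exact: eq_integrable.
Qed.

Lemma Rintegral_affine (al be : R) :
  \int[P]_x (al + be * f x) = al + be * \int[P]_x f x.
Proof.
have intbf : P.-integrable setT (EFin \o (fun x => be * f x)).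
  exact: eq_integrable (integrableZl measurableT be intf).
rewrite RintegralD //; last exact: finite_measure_integrable_cst.
by rewrite Rintegral_cst // [X in fine X](probability_setT P) mulr1 RintegralZl.
Qed.

End probability_affine.

Section normal_integrals.
Context (R : realType).
Notation mu := (@lebesgue_measure R).
Local Open Scope ereal_scope.
Import HBNNSimple.

Lemma integral_normal_prob_nnsfun (m s : R) (h : {nnsfun measurableTypeR R >-> R}) :
  \int[normal_prob m s]_x (h x)%:E = \int[mu]_x ((h x)%:E * (normal_pdf m s x)%:E).
Proof.
set g := fun x : measurableTypeR R => (normal_pdf m s x)%:E.
have mg : measurable_fun [set: measurableTypeR R] g.
  by apply/measurable_EFinP; exact: measurable_normal_pdf.
have g0 x : 0 <= g x by rewrite lee_fin normal_pdf_ge0.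
have mh y : measurable_fun setT (fun x => (y * \1_(h @^-1` [set y]) x)%:E).
  by apply: (measurable_comp measurableT) => //; exact: measurable_funM.
transitivity (\int[normal_prob m s]_x
    (\sum_(y \in range h) (y * \1_(h @^-1` [set y]) x)%:E)).
  by apply: eq_integral => x _; rewrite fimfunE -fsumEFin.
rewrite ge0_integral_fsum //; last by move=> y x _; exact: nnfun_muleindic_ge0.
transitivity (\int[mu]_x (\sum_(y \in range h)
    (y * \1_(h @^-1` [set y]) x)%:E * g x)); last first.
  apply: eq_integral => x _.
  rewrite -ge0_mule_fsuml => [|y]; last exact: nnfun_muleindic_ge0.
  by rewrite fsumEFin // -(fimfunE _ x).
rewrite ge0_integral_fsum //; last 2 first.
- by move=> y; apply: emeasurable_funM.
- by move=> y x _; rewrite mule_ge0 // nnfun_muleindic_ge0.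
apply: eq_fsbigr => r hr.
under [RHS]eq_integral do rewrite EFinM -muleA.
rewrite ge0_integralZl //; last 3 first.
- by apply: emeasurable_funM => //; exact/measurable_EFinP.
- by move=> x _; rewrite mule_ge0 ?g0 ?lee_fin.
- by move: hr; rewrite inE => -[x _ <-]; rewrite lee_fin.
under [in LHS]eq_integral do rewrite EFinM.
rewrite integralZl_indic_nnsfun //; congr (_ * _).
rewrite integral_indic // setIT.
under eq_integral do rewrite muleC.
rewrite (eq_integral (g \_ (h @^-1` [set r]))); last first.
  by move=> x _; rewrite epatch_indic.
by rewrite -integral_mkcondr setTI.
Qed.

Lemma ge0_integral_normal_prob (m s : R) (f : measurableTypeR R -> \bar R) :
  (forall x, 0 <= f x) -> measurable_fun setT f ->
  \int[normal_prob m s]_x f x = \int[mu]_x (f x * (normal_pdf m s x)%:E).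
Proof.
move=> f0 mf; set g := fun x : measurableTypeR R => (normal_pdf m s x)%:E.
have mg : measurable_fun [set: measurableTypeR R] g.
  by apply/measurable_EFinP; exact: measurable_normal_pdf.
have g0 x : 0 <= g x by rewrite lee_fin normal_pdf_ge0.
pose h := nnsfun_approx measurableT mf.
have -> : \int[normal_prob m s]_x f x =
    lim (\int[normal_prob m s]_x (EFin \o h n) x @[n --> \oo]).
  have fE x : setT x -> f x = lim ((EFin \o h n) x @[n --> \oo]).
    by move=> _; apply/esym/cvg_lim => //; exact: cvg_nnsfun_approx.
  under eq_integral => x /[!inE] /fE -> //.
  apply: monotone_convergence => //.
  - by move=> n; apply/measurable_EFinP; exact: measurable_funPT.
  - by move=> n x _ /=; rewrite lee_fin.
  - by move=> x _ a b ab; rewrite lee_fin; exact/lefP/nd_nnsfun_approx.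
have -> : \int[mu]_x (f x * g x) =
    lim (\int[mu]_x ((EFin \o h n) \* g) x @[n --> \oo]).
  have fg x : setT x -> f x * g x = lim (((EFin \o h n) \* g) x @[n --> \oo]).
    by move=> _; apply/esym/cvg_lim => //; apply: cvgeZr;
      [by []|exact: cvg_nnsfun_approx].
  under eq_integral => x /[!inE] /fg -> //.
  apply: monotone_convergence => [//| | |].
  - by move=> n; apply/emeasurable_funM => //; exact/measurable_EFinP.
  - by move=> n x _ /=; rewrite mule_ge0 ?g0 ?lee_fin.
  - move=> x _ a b ab /=; rewrite lee_wpmul2r ?g0 // lee_fin.
    exact/lefP/nd_nnsfun_approx.
by congr (limn _); apply/funext => n; exact: integral_normal_prob_nnsfun.
Qed.

End normal_integrals.

Definition exp_sqr (R : realType) (lam a b x : R) := expR (- lam * (b + a * x) ^+ 2).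

Section gaussian_integral.
Context (R : realType).
Notation N := (@normal_prob R 0 1).
Variables lam a b : R.
Hypothesis lam_a : 0 < 1 + 2 * lam * a ^+ 2.

Lemma measurable_exp_sqr : measurable_fun setT (exp_sqr lam a b).
Proof.
apply: measurableT_comp => //; apply: measurable_funM => //.
by apply: measurable_funX => //; apply: measurable_funD => //; apply: measurable_funM.
Qed.

Lemma integral_exp_sqr :
  (\int[N]_x (exp_sqr lam a b x)%:E =
   (expR (- lam * b ^+ 2 / (1 + 2 * lam * a ^+ 2)) /
    Num.sqrt (1 + 2 * lam * a ^+ 2))%:E)%E.
Proof.
set k := 1 + 2 * lam * a ^+ 2.
have k0 : k != 0 by rewrite gt_eqF.
rewrite ge0_integral_normal_prob; last 2 first.
- by move=> x; rewrite lee_fin expR_ge0.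
- by apply/measurable_EFinP; exact: measurable_exp_sqr.
set s := Num.sqrt k^-1.
have s2 : s ^+ 2 = k^-1 by rewrite sqr_sqrtr // invr_ge0 ltW.
have s0 : s != 0 by rewrite sqrtr_eq0 -ltNge invr_gt0.
set m := - (2 * lam * a * b) / k.
set C := expR (- lam * b ^+ 2 / k).
have ps0 : normal_peak s != 0 by rewrite gt_eqF // normal_peak_gt0.
(* completing the square in the exponent *)
have sqrE y : - lam * (b + a * y) ^+ 2 + - (y - 0) ^+ 2 / (1 ^+ 2 *+ 2) =
    - lam * b ^+ 2 / k + - (y - m) ^+ 2 / (k^-1 *+ 2).
  by rewrite /m /k; field; rewrite -/k.
have -> : (fun x => (exp_sqr lam a b x)%:E * (normal_pdf 0 1 x)%:E)%E =
    (fun x => (normal_peak 1 * C / normal_peak s)%:E * (normal_pdf m s x)%:E)%E.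
  apply/funext => x; rewrite -!EFinM; congr EFin.
  rewrite !normal_pdfE ?oner_neq0 //= /normal_fun.
  transitivity (normal_peak 1 * (C * expR (- (x - m) ^+ 2 / (s ^+ 2 *+ 2))));
    last by field.
  by rewrite mulrCA; congr (_ * _); rewrite /C -!expRD s2 sqrE.
rewrite integralZl //; last exact: integrable_normal_pdf.
rewrite integral_normal_pdf mule1; congr EFin.
rewrite /normal_peak s2 /C invrK -mulrnAr sqrtrM ?invr_ge0 ?ltW // expr1n.
rewrite sqrtr1 mul1r -mulrnAr sqrtrM ?invr_ge0 ?ltW // sqrtrV ?ltW //.
have h1 : Num.sqrt (pi *+ 2 : R) != 0 by rewrite gt_eqF // sqrtr_gt0 mulrn_wgt0 // pi_gt0.
have h2 : Num.sqrt k != 0 by rewrite gt_eqF // sqrtr_gt0.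
by field; rewrite h1 h2.
Qed.

Lemma integrable_exp_sqr : N.-integrable setT (EFin \o exp_sqr lam a b).
Proof.
apply/integrableP; split; first by apply/measurable_EFinP; exact: measurable_exp_sqr.
under eq_integral do rewrite /= ger0_norm ?expR_ge0 //.
by rewrite integral_exp_sqr ltry.
Qed.

Lemma Rintegral_exp_sqr :
  \int[N]_x exp_sqr lam a b x =
  expR (- lam * b ^+ 2 / (1 + 2 * lam * a ^+ 2)) / Num.sqrt (1 + 2 * lam * a ^+ 2).
Proof. by rewrite /Rintegral integral_exp_sqr. Qed.

End gaussian_integral.

Section update.
Context (R : pzRingType).

Definition update (g : nat -> R) (k : nat) (x : R) : nat -> R :=
  fun i => if i == k then x else g i.

Lemma big_ord_update k (c : nat -> R) (F : R -> R) (g : nat -> R) x :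
  \sum_(i < k.+1) c i * F (update g k x i) = c k * F x + \sum_(i < k) c i * F (g i).
Proof.
rewrite big_ord_recr /= /update eqxx addrC; congr (_ + _).
by apply: eq_bigr => i _; rewrite ltn_eqF.
Qed.

Definition nat_ext n (f : 'I_n -> R) : nat -> R :=
  fun k => if insub k is Some i then f i else 0.

Lemma nat_extE n (f : 'I_n -> R) (i : 'I_n) : nat_ext f i = f i.
Proof. by rewrite /nat_ext valK. Qed.

End update.

Section gaussian_expectation.
Context (R : realType).
Notation N := (@normal_prob R 0 1).

Lemma gauss_expectS k (f : (nat -> R) -> R) :
  gauss_expect k.+1 f = \int[N]_x gauss_expect k (fun g => f (update g k x)).
Proof. by []. Qed.

Lemma gauss_expect_ge0 k (f : (nat -> R) -> R) :
  (forall g, 0 <= f g) -> 0 <= gauss_expect k f.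
Proof.
elim: k f => [|k IH] f f0 /=; first exact: f0.
by apply: Rintegral_ge0 => x _; apply: IH => g; exact: f0.
Qed.

Lemma gauss_expect_exp_sqr k al be lam b (a : nat -> R) : 0 <= lam ->
  gauss_expect k (fun g => al + be * expR (- lam * (b + \sum_(i < k) a i * g i) ^+ 2)) =
  al + be * (expR (- lam * b ^+ 2 / (1 + 2 * lam * \sum_(i < k) a i ^+ 2)) /
             Num.sqrt (1 + 2 * lam * \sum_(i < k) a i ^+ 2)).
Proof.
elim: k al be lam b => [|k IH] al be lam b lam0.
  by rewrite /= !big_ord0 addr0 mulr0 addr0 sqrtr1 !divr1.
set S := \sum_(i < k) a i ^+ 2.
have S0 : 0 <= S by apply: sumr_ge0 => i _; exact: sqr_ge0.
set K := 1 + 2 * lam * S.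
have K0 : 0 < K by rewrite /K ltr_pwDl // !mulr_ge0.
set K' := 1 + 2 * (lam / K) * a k ^+ 2.
have K'0 : 0 < K' by rewrite /K' ltr_pwDl // mulr_ge0 ?sqr_ge0 // mulr_ge0 // divr_ge0 // ltW.
rewrite gauss_expectS /=.
have -> : (fun x => gauss_expect k (fun g => al + be *
      expR (- lam * (b + \sum_(i < k.+1) a i * update g k x i) ^+ 2))) =
    (fun x => al + (be / Num.sqrt K) * exp_sqr (lam / K) (a k) b x).
  apply/funext => x.
  under eq_fun do rewrite (big_ord_update _ _ id) addrA.
  rewrite IH // -/S -/K /exp_sqr mulrA mulrAC; congr (_ + _ * expR _).
  by field; rewrite gt_eqF.
rewrite Rintegral_affine ?integrable_exp_sqr // Rintegral_exp_sqr // -/K'.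
have -> : 1 + 2 * lam * \sum_(i < k.+1) a i ^+ 2 = K * K'.
  by rewrite big_ord_recr /= -/S /K' /K; field; rewrite gt_eqF.
rewrite sqrtrM ?ltW //; congr (_ + _).
have -> : - (lam / K) * b ^+ 2 / K' = - lam * b ^+ 2 / (K * K').
  by field; rewrite !gt_eqF.
have hK : Num.sqrt K != 0 by rewrite gt_eqF // sqrtr_gt0.
have hK' : Num.sqrt K' != 0 by rewrite gt_eqF // sqrtr_gt0.
by field; rewrite hK hK'.
Qed.

Lemma abs_ge_gauss (t y : R) : 0 < t ->
  t * (1 - expR (- (1 / (2 * t ^+ 2)) * y ^+ 2)) <= `|y|.
Proof.
move=> t0; set u := 1 / (2 * t ^+ 2) * y ^+ 2.
have u0 : 0 <= u by rewrite mulr_ge0 ?sqr_ge0 // divr_ge0 // mulr_ge0 // sqr_ge0.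
have e1 : 1 - u <= expR (- (1 / (2 * t ^+ 2)) * y ^+ 2).
  by rewrite mulNr; exact: expR_ge1Dx.
have e2 := expR_ge0 (- (1 / (2 * t ^+ 2)) * y ^+ 2).
have [ty|yt] := leP t `|y|; first by apply: le_trans ty; nra.
apply: (@le_trans _ _ (t * u)); first nra.
have -> : t * u = `|y| ^+ 2 / (2 * t).
  by rewrite real_normK ?num_real // /u; field; rewrite gt_eqF.
rewrite ler_pdivrMr ?mulr_gt0 //; have := normr_ge0 y; nra.
Qed.

Section dominated.
Variable u : R -> R.
Hypothesis intu : N.-integrable setT (EFin \o u).

Lemma gauss_expect_sum k al (c : nat -> R) :
  gauss_expect k (fun g => al + \sum_(i < k) c i * u (g i)) =
  al + (\int[N]_x u x) * \sum_(i < k) c i.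
Proof.
elim: k al => [|k IH] al /=; first by rewrite !big_ord0 mulr0.
have -> : (fun x => gauss_expect k (fun g =>
      al + \sum_(i < k.+1) c i * u (update g k x i))) =
    (fun x => (al + (\int[N]_y u y) * \sum_(i < k) c i) + c k * u x).
  apply/funext => x; under eq_fun do rewrite big_ord_update addrA.
  by rewrite IH addrAC.
by rewrite Rintegral_affine // big_ord_recr /=; ring.
Qed.

(* Rintegral returns 0 on non-integrable functions, so monotonicity needs an integrable majorant. *)
Lemma le_gauss_expect k (f h : (nat -> R) -> R) al (c : nat -> R) :
  (forall i, 0 <= c i) -> (forall g, 0 <= f g) -> (forall g, f g <= h g) ->
  (forall g, h g <= al + \sum_(i < k) c i * u (g i)) ->
  gauss_expect k f <= gauss_expect k h.
Proof.
elim: k f h al => [|k IH] f h al c0 f0 fh hu; first exact: fh.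
rewrite !gauss_expectS.
set pf := fun x => gauss_expect k (fun g => f (update g k x)).
set ph := fun x => gauss_expect k (fun g => h (update g k x)).
set al' := al + (\int[N]_y u y) * \sum_(i < k) c i.
have hu' x g : h (update g k x) <= (al + c k * u x) + \sum_(i < k) c i * u (g i).
  by rewrite -addrA -(big_ord_update k c u); exact: hu.
have pfh x : pf x <= ph x by apply: (IH _ _ (al + c k * u x)).
have phu x : ph x <= al' + c k * u x.
  have -> : al' + c k * u x = gauss_expect k (fun g =>
      (al + c k * u x) + \sum_(i < k) c i * u (g i)).
    by rewrite gauss_expect_sum /al'; ring.
  by apply: (IH _ _ (al + c k * u x)) => // g; exact: le_trans (f0 _) (fh _).
have pf0 x : 0 <= pf x by apply: gauss_expect_ge0.
have ph0 x : 0 <= ph x by exact: le_trans (pf0 x) (pfh x).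
have ub := integrable_fin_num measurableT (integrable_affine intu al' (c k)).
have Ipfh : (\int[N]_x (pf x)%:E <= \int[N]_x (ph x)%:E)%E.
  by apply: ge0_le_integralT => x; rewrite lee_fin.
have Iphu : (\int[N]_x (ph x)%:E <= \int[N]_x (al' + c k * u x)%:E)%E.
  by apply: ge0_le_integralT => x; rewrite lee_fin.
have Iph_fin : (\int[N]_x (ph x)%:E \is a fin_num)%E.
  rewrite ge0_fin_numE; last by apply: integral_ge0 => x _; rewrite lee_fin.
  by apply: le_lt_trans Iphu _; rewrite ltey_eq ub.
apply: fine_le => //.
rewrite ge0_fin_numE; last by apply: integral_ge0 => x _; rewrite lee_fin.
by apply: le_lt_trans Ipfh _; rewrite ltey_eq Iph_fin.
Qed.

Lemma gauss_expect_abs_ge n (F : (nat -> R) -> R) (a c : nat -> R) (w al : R) :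
  0 <= w -> 0 < \sum_(i < n) a i ^+ 2 -> (forall i, 0 <= c i) ->
  (forall g, 0 <= F g) -> (forall g, F g <= al + \sum_(i < n) c i * u (g i)) ->
  (forall g : nat -> R, w * `|\sum_(i < n) a i * g i| <= F g) ->
  w * Num.sqrt (\sum_(i < n) a i ^+ 2) * (1 - 1 / Num.sqrt 2) <= gauss_expect n F.
Proof.
move=> w0 S0 c0 F0 Fu Fl.
set t := Num.sqrt (\sum_(i < n) a i ^+ 2).
have t0 : 0 < t by rewrite sqrtr_gt0.
have t2 : t ^+ 2 = \sum_(i < n) a i ^+ 2 by rewrite sqr_sqrtr // ltW.
have wt0 : 0 <= w * t by rewrite mulr_ge0 // ltW.
pose L := fun g : nat -> R => w * t + - (w * t) *
  expR (- (1 / (2 * t ^+ 2)) * (0 + \sum_(i < n) a i * g i) ^+ 2).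
have EL : gauss_expect n L = w * t * (1 - 1 / Num.sqrt 2).
  rewrite gauss_expect_exp_sqr ?divr_ge0 ?mulr_ge0 ?sqr_ge0 ?(ltW t0) // -t2.
  have -> : 1 + 2 * (1 / (2 * t ^+ 2)) * t ^+ 2 = 2.
    by field; rewrite gt_eqF // exprn_gt0.
  by rewrite expr0n /= mulr0 mul0r expR0; ring.
have L0 g : 0 <= L g.
  have : expR (- (1 / (2 * t ^+ 2)) * (0 + \sum_(i < n) a i * g i) ^+ 2) <= 1.
    by rewrite expR_le1 mulNr oppr_le0 mulr_ge0 ?sqr_ge0 // divr_ge0 // mulr_ge0 // sqr_ge0.
  by rewrite /L; nra.
have LF g : L g <= F g.
  apply: le_trans (Fl g); rewrite /L add0r; set E := expR _.
  have -> : w * t + - (w * t) * E = w * (t * (1 - E)) by ring.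
  by rewrite ler_wpM2l // abs_ge_gauss.
by rewrite -EL; apply: (le_gauss_expect (al := al) (c := c)).
Qed.

End dominated.

End gaussian_expectation.

Section sign_expectation.
Context (R : rcfType).

Fixpoint sign_expect (k : nat) (f : (nat -> R) -> R) : R :=
  match k with
  | 0 => f (fun _ => 0)
  | k.+1 => (sign_expect k (fun g => f (update g k 1)) +
             sign_expect k (fun g => f (update g k (-1)))) / 2
  end.

Lemma le_sign_expect k (f h : (nat -> R) -> R) :
  (forall g, f g <= h g) -> sign_expect k f <= sign_expect k h.
Proof.
elim: k f h => [|k IH] f h fh /=; first exact: fh.
by rewrite ler_pM2r // lerD // IH.
Qed.

(* With Y = sum_i a_i r_i and S = sum_i a_i^2:
   E (b + Y)^2 = b^2 + S and E (b + Y)^4 <= b^4 + 6 b^2 S + 3 S^2. *)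
Lemma sign_expect_quartic_ge k (c2 c4 b : R) (a : nat -> R) : 0 <= c4 ->
  c2 * (b ^+ 2 + \sum_(i < k) a i ^+ 2) -
  c4 * (b ^+ 4 + 6 * b ^+ 2 * \sum_(i < k) a i ^+ 2 + 3 * (\sum_(i < k) a i ^+ 2) ^+ 2)
  <= sign_expect k (fun g => c2 * (b + \sum_(i < k) a i * g i) ^+ 2 -
                             c4 * (b + \sum_(i < k) a i * g i) ^+ 4).
Proof.
elim: k b => [|k IH] b c40 /=.
  by rewrite !big_ord0 !addr0 expr0n /= !mulr0 !addr0.
set S := \sum_(i < k) a i ^+ 2.
have hS : 0 <= S by apply: sumr_ge0 => i _; exact: sqr_ge0.
have IHs s : c2 * ((b + a k * s) ^+ 2 + S) -
    c4 * ((b + a k * s) ^+ 4 + 6 * (b + a k * s) ^+ 2 * S + 3 * S ^+ 2) <=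
    sign_expect k (fun g => c2 * (b + \sum_(i < k.+1) a i * update g k s i) ^+ 2 -
                            c4 * (b + \sum_(i < k.+1) a i * update g k s i) ^+ 4).
  under eq_fun do rewrite (big_ord_update _ _ id) addrA.
  exact: IH.
have := IHs 1; have := IHs (-1).
have := mulr_ge0 c40 (exprn_even_ge0 (a k) (isT : ~~ odd 4)).
rewrite big_ord_recr /= -/S; lra.
Qed.

Lemma abs_ge_quartic (t y : R) : 0 < t ->
  3 / (4 * t) * y ^+ 2 - 1 / (16 * t ^+ 3) * y ^+ 4 <= `|y|.
Proof.
move=> t0; set v := `|y|.
have v0 : 0 <= v := normr_ge0 y.
have y2 : y ^+ 2 = v ^+ 2 by rewrite /v real_normK // num_real.
have y4 : y ^+ 4 = v ^+ 4 by rewrite (_ : 4 = 2 * 2)%N // !exprM y2.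
rewrite y2 y4 -subr_ge0.
have -> : v - (3 / (4 * t) * v ^+ 2 - 1 / (16 * t ^+ 3) * v ^+ 4) =
    (v * ((v - 2 * t) ^+ 2 * (v + 4 * t))) / (16 * t ^+ 3).
  by field; rewrite gt_eqF.
have t3 : 0 < 16 * t ^+ 3 by rewrite mulr_gt0 // exprn_gt0.
by rewrite divr_ge0 ?(ltW t3) // mulr_ge0 // mulr_ge0 ?sqr_ge0 // addr_ge0 // mulr_ge0 // ltW.
Qed.

Lemma sign_expect_abs_ge n (F : (nat -> R) -> R) (a : nat -> R) (w : R) :
  0 <= w -> 0 < \sum_(i < n) a i ^+ 2 ->
  (forall g : nat -> R, w * `|\sum_(i < n) a i * g i| <= F g) ->
  w * Num.sqrt (\sum_(i < n) a i ^+ 2) * (9 / 16) <= sign_expect n F.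
Proof.
move=> w0 S0 Fl.
set t := Num.sqrt (\sum_(i < n) a i ^+ 2).
have t0 : 0 < t by rewrite sqrtr_gt0.
have t2 : \sum_(i < n) a i ^+ 2 = t ^+ 2 by rewrite sqr_sqrtr // ltW.
have c40 : 0 <= w * (1 / (16 * t ^+ 3)).
  by rewrite mulr_ge0 // divr_ge0 // mulr_ge0 // ltW // exprn_gt0.
pose Q := fun g : nat -> R =>
  w * (3 / (4 * t)) * (0 + \sum_(i < n) a i * g i) ^+ 2 -
  w * (1 / (16 * t ^+ 3)) * (0 + \sum_(i < n) a i * g i) ^+ 4.
have QF : sign_expect n Q <= sign_expect n F.
  apply: le_sign_expect => g; apply: le_trans (Fl g).
  apply: le_trans (ler_wpM2l w0 (abs_ge_quartic _ t0)).
  by rewrite /Q add0r mulrBr !mulrA.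
apply: le_trans QF; apply: le_trans (sign_expect_quartic_ge n _ 0 a c40).
rewrite t2 expr0n /= add0r mulr0 mul0r !addr0 le_eqVlt; apply/orP; left.
by apply/eqP; field; rewrite gt_eqF.
Qed.

Definition sign_ext n (b : {ffun 'I_n -> bool}) : nat -> R :=
  nat_ext (fun i => if b i then 1 else -1).

Definition ffun_snoc n (p : bool * {ffun 'I_n -> bool}) : {ffun 'I_n.+1 -> bool} :=
  [ffun i => if unlift ord_max i is Some j then p.2 j else p.1].

Definition ffun_unsnoc n (b : {ffun 'I_n.+1 -> bool}) : bool * {ffun 'I_n -> bool} :=
  (b ord_max, [ffun j => b (lift ord_max j)]).

Lemma ffun_snocK n : cancel (@ffun_snoc n) (@ffun_unsnoc n).
Proof.
case=> s b; rewrite /ffun_unsnoc /ffun_snoc /= ffunE unlift_none; congr pair.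
by apply/ffunP => j; rewrite !ffunE liftK.
Qed.

Lemma ffun_unsnocK n : cancel (@ffun_unsnoc n) (@ffun_snoc n).
Proof.
move=> b; apply/ffunP => i; rewrite /ffun_unsnoc /ffun_snoc ffunE /=.
by case: unliftP => [j ->|->]; rewrite ?ffunE.
Qed.

Lemma sign_ext_snoc n s (b : {ffun 'I_n -> bool}) :
  sign_ext (ffun_snoc (s, b)) = update (sign_ext b) n (if s then 1 else -1).
Proof.
apply/funext => i; rewrite /sign_ext /nat_ext /update.
case: (ltngtP i n) => [lt|gt|->].
- have lt' : (i < n.+1)%N by apply: ltnW.
  rewrite (insubT (fun k => (k < n.+1)%N) lt') (insubT (fun k => (k < n)%N) lt) ffunE.
  have -> : Sub i lt' = lift ord_max (Sub i lt : 'I_n).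
    by apply: val_inj; rewrite /= /bump leqNgt lt.
  by rewrite liftK.
- by rewrite !insubF //; apply/negbTE; rewrite -leqNgt // ltnW.
- rewrite (insubT (fun k => (k < n.+1)%N) (ltnSn n)) ffunE.
  have -> : Sub n (ltnSn n) = @ord_max n by apply: val_inj.
  by rewrite unlift_none.
Qed.

Lemma sign_expectE n (H : (nat -> R) -> R) :
  sign_expect n H = (2 ^+ n)^-1 * \sum_(b : {ffun 'I_n -> bool}) H (sign_ext b).
Proof.
elim: n H => [|n IH] H /=.
  rewrite expr0 invr1 mul1r (eq_bigr (fun _ => H (fun _ => 0))) => [|b _].
    by rewrite sumr_const card_ffun card_ord card_bool expn0 mulr1n.
  by congr H; apply/funext => i; rewrite /sign_ext /nat_ext insubF.
rewrite !IH (reindex (@ffun_snoc n)) /=; last first.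
  by apply: onW_bij; exists (@ffun_unsnoc n); [exact: ffun_snocK|exact: ffun_unsnocK].
rewrite -(pair_big xpredT xpredT (fun s b => H (sign_ext (ffun_snoc (s, b))))) /=.
rewrite big_bool /=; under [in RHS]eq_bigr do rewrite sign_ext_snoc.
under [X in _ = _ * (_ + X)]eq_bigr do rewrite sign_ext_snoc.
by rewrite exprS invfM; field; rewrite expf_neq0.
Qed.

End sign_expectation.

Lemma ler_sum_undup (R : numDomainType) (T : eqType) (s : seq T) (f : T -> R) :
  (forall i, 0 <= f i) -> \sum_(i <- undup s) f i <= \sum_(i <- s) f i.
Proof.
move=> f0; elim: s => [|x s IH] //=.
case: ifP => xs; rewrite big_cons; last by rewrite big_cons lerD2l.
by apply: le_trans IH _; rewrite lerDr.
Qed.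

Lemma ler_sum_cover (R : numDomainType) (T : finType) (f : T -> R) (s : seq T) :
  (forall i, 0 <= f i) -> (forall i, i \in s) -> \sum_i f i <= \sum_(i <- s) f i.
Proof.
move=> f0 s_full; apply: le_trans (ler_sum_undup s f0).
rewrite -big_enum /= (perm_big (undup s)) //; apply: uniq_perm.
- exact: enum_uniq.
- exact: undup_uniq.
- by move=> i; rewrite mem_enum mem_undup s_full.
Qed.

Section traversals.
Variables m1 m2 : nat.

Lemma trav_step_fst (p q : 'I_m1 * 'I_m2) : trav_step p q -> (val q.1 <= (val p.1).+1)%N.
Proof. by rewrite /trav_step => /or3P[] /andP[/eqP-> _]. Qed.

Lemma path_trav_step_fst x (T : seq ('I_m1 * 'I_m2)) : path (@trav_step m1 m2) x T ->
  forall i : 'I_m1, (x.1 <= i <= (last x T).1)%N -> i \in map fst (x :: T).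
Proof.
elim: T x => [|y T IH] x /=.
  move=> _ i /andP[h1 h2]; rewrite inE.
  by apply/eqP/val_inj/eqP; rewrite /= eqn_leq h1 h2.
move=> /andP[/trav_step_fst xy yT] i /andP[h1 h2].
have [->|ne] := eqVneq i x.1; first by rewrite inE eqxx.
rewrite inE IH ?orbT // h2 andbT (leq_trans xy) // ltn_neqAle h1 andbT eq_sym.
exact: ne.
Qed.

Lemma traversal_sum_ge (R : numDomainType) x (T : seq ('I_m1 * 'I_m2)) (f : 'I_m1 -> R) :
  is_traversal x T -> (forall i, 0 <= f i) -> \sum_i f i <= \sum_(p <- x :: T) f p.1.
Proof.
move=> /and5P[x1 _ xT xTl _] f0; rewrite -(big_map fst xpredT f).
apply: ler_sum_cover => // i; apply: (path_trav_step_fst xT).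
by rewrite (eqP x1) (eqP xTl) /= -ltnS prednK // (leq_ltn_trans _ (ltn_ord i)).
Qed.

End traversals.

Lemma last_iota j k : last j (iota j.+1 k) = (j + k)%N.
Proof. by elim: k j => [|k IH] j /=; rewrite ?addn0 // IH addSnnS. Qed.

Lemma diag_traversal m : (0 < m)%N ->
  exists x (T : seq ('I_m * 'I_m)), is_traversal x T /\ size (x :: T) = m.
Proof.
case: m => // m _.
pose f i : 'I_m.+1 * 'I_m.+1 := (inord i, inord i).
have fK i : (i <= m)%N -> (val (f i).1 = i) * (val (f i).2 = i) by move=> im; rewrite /= inordK.
exists (f 0%N), (map f (iota 1 m)); split; last by rewrite /= size_map size_iota.
have lastE : last (f 0%N) (map f (iota 1 m)) = f m by rewrite last_map last_iota.
have fpath k j : (j + k <= m)%N -> path (@trav_step _ _) (f j) (map f (iota j.+1 k)).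
  elim: k j => [|k IH] j jk //=.
  rewrite IH ?addSnnS // andbT /trav_step !fK ?eqxx ?orbT //.
  - by rewrite (leq_trans _ jk) // leq_addr.
  - by rewrite (leq_trans _ jk) // addnS ltnS leq_addr.
by apply/and5P; split; rewrite ?lastE ?fK ?fpath.
Qed.

Section dtw_bounds.
Context (R : realType).

Lemma enorm_ge0 d (v : 'rV[R]_d) : 0 <= enorm v.
Proof. exact: sqrtr_ge0. Qed.

Lemma enorm_ge_coord d (v : 'rV[R]_d) j : `|v ord0 j| <= enorm v.
Proof.
rewrite /enorm -sqrtr_sqr ler_wsqrtr // (bigD1 j) //= lerDl.
by apply: sumr_ge0 => i _; exact: sqr_ge0.
Qed.

Lemma enormB_le2 d (v w : 'rV[R]_d) : enorm v <= 1 -> enorm w <= 1 -> enorm (v - w) <= 2.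
Proof.
have enorm_sqr (x : 'rV[R]_d) : enorm x ^+ 2 = \sum_(i < d) (x ord0 i) ^+ 2.
  by rewrite sqr_sqrtr // sumr_ge0 // => i _; exact: sqr_ge0.
move=> v1 w1.
have : enorm (v - w) ^+ 2 <= 2 * enorm v ^+ 2 + 2 * enorm w ^+ 2.
  rewrite !enorm_sqr !mulr_sumr -big_split /=; apply: ler_sum => i _.
  by rewrite !mxE; have := sqr_ge0 (v ord0 i + w ord0 i); nra.
have := enorm_ge0 (v - w); have := enorm_ge0 v; have := enorm_ge0 w; nra.
Qed.

Lemma dtw_ge0 d m1 m2 (s : curve R d m1) (t : curve R d m2) : 0 <= dtw s t.
Proof.
rewrite /dtw; set E := [set c | _].
have [->|/set0P E0] := eqVneq E set0; first by rewrite inf0.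
apply: lb_le_inf => // _ [x [T [_ ->]]].
by apply: sumr_ge0 => p _; exact: enorm_ge0.
Qed.

Variables (d m : nat).
Hypothesis m_gt0 : (0 < m)%N.

Lemma dtw_le (s t : curve R d m) : in_unit_ball s -> in_unit_ball t -> dtw s t <= 2 * m%:R.
Proof.
move=> s1 t1; have [x [T [xT sizeT]]] := diag_traversal m_gt0.
apply: le_trans (_ : \sum_(p <- x :: T) enorm (s p.1 - t p.2) <= _).
  apply: ge_inf; last by exists x, T.
  by exists 0 => _ [y [U [_ ->]]]; apply: sumr_ge0 => p _; exact: enorm_ge0.
apply: le_trans (_ : \sum_(p <- x :: T) (2 : R) <= _).
  by apply: ler_sum => p _; exact: enormB_le2.
by rewrite big_const_seq count_predT sizeT iter_addr_0 mulr_natr.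
Qed.

Lemma dtw_const_ge (s : curve R d m) (w : 'rV[R]_d) :
  \sum_k enorm (s k - w) <= dtw s (fun _ : 'I_m => w).
Proof.
have [x [T [xT _]]] := diag_traversal m_gt0.
apply: lb_le_inf; first by exists (\sum_(p <- x :: T) enorm (s p.1 - w)), x, T.
move=> _ [y [U [yU ->]]].
by apply: (traversal_sum_ge (f := fun k => enorm (s k - w))) => // k; exact: enorm_ge0.
Qed.

End dtw_bounds.

Lemma sum_sqr_ge (R : realFieldType) n (a : 'I_n -> R) (c : R) :
  0 <= c -> c * n%:R <= \sum_i a i -> c ^+ 2 * n%:R <= \sum_i a i ^+ 2.
Proof.
move=> c0 sum_a; apply: le_trans (_ : \sum_i (2 * c * a i - c ^+ 2) <= _).
  rewrite sumrB -mulr_sumr sumr_const card_ord -mulr_natr.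
  by have := ler_wpM2l c0 sum_a; nra.
by apply: ler_sum => i _; have := sqr_ge0 (a i - c); nra.
Qed.

Lemma sqrt_ratio_le (R : rcfType) (m n : nat) (S k : R) : (0 < n)%N ->
  m%:R ^+ 2 * n%:R <= S -> 1 / 4 <= k ->
  1 / 4 * Num.sqrt (m%:R ^+ 2 / n%:R) <= (n%:R)^-1 * Num.sqrt S * k.
Proof.
move=> n_gt0 mS k_ge.
have n0 : (n%:R : R) != 0 by rewrite pnatr_eq0 -lt0n.
have -> : m%:R ^+ 2 / n%:R = (n%:R)^-1 ^+ 2 * (m%:R ^+ 2 * n%:R) :> R by field.
rewrite sqrtrM ?sqr_ge0 // sqrtr_sqr ger0_norm ?invr_ge0 //.
have := ler_wsqrtr mS; have := sqrtr_ge0 (m%:R ^+ 2 * n%:R : R).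
have : 0 <= (n%:R : R)^-1 by rewrite invr_ge0.
set X := Num.sqrt _; set Y := Num.sqrt S; set u := (n%:R)^-1 => u0 X0 XY.
have : 0 <= u * Y * (k - 1 / 4) by rewrite !mulr_ge0 ?subr_ge0 // (le_trans X0).
nra.
Qed.

Lemma one_sub_inv_sqrt2_ge (R : rcfType) : 1 / 4 <= 1 - 1 / Num.sqrt (2 : R).
Proof.
set s := Num.sqrt (2 : R).
have s2 : s ^+ 2 = 2 by rewrite sqr_sqrtr.
have s0 : 0 <= s := sqrtr_ge0 _.
have s_gt : 4 / 3 <= s by nra.
have -> : 1 - 1 / s = (s - 1) / s by field; rewrite gt_eqF //; lra.
rewrite ler_pdivlMr; lra.
Qed.

Section median_witness.
Context (R : realType) (d m : nat).
Hypothesis m_gt0 : (0 < m)%N.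

Definition unit_row : 'rV[R]_d.+1 := \row_j (j == ord0)%:R.

Lemma enorm_unit_row : enorm unit_row = 1.
Proof.
rewrite /enorm (bigD1 ord0) //= big1 ?addr0 ?mxE ?eqxx ?expr1n ?sqrtr1 //.
by move=> j /negPf j0; rewrite mxE j0 expr0n.
Qed.

Lemma enormN k (v : 'rV[R]_k) : enorm (- v) = enorm v.
Proof. by rewrite /enorm; congr Num.sqrt; apply: eq_bigr => j _; rewrite mxE sqrrN. Qed.

(* On the first coordinate, |x - 1| + |x + 1| >= 2 for every vertex x. *)
Lemma dtw_const_unit_row_ge (s : curve R d.+1 m) :
  2 * m%:R <= dtw s (fun _ : 'I_m => unit_row) + dtw s (fun _ : 'I_m => - unit_row).
Proof.
apply: le_trans (lerD (dtw_const_ge m_gt0 s _) (dtw_const_ge m_gt0 s _)).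
have -> : 2 * m%:R = \sum_(k < m) (2 : R) by rewrite sumr_const card_ord mulr_natr.
rewrite -big_split /= ler_sum // => k _.
apply: le_trans (lerD (enorm_ge_coord _ ord0) (enorm_ge_coord _ ord0)).
rewrite !mxE /unit_row ?mxE eqxx opprK /=; set x := s k ord0 ord0.
rewrite -normrN; apply: le_trans (ler_normD _ _).
have -> : - (x - 1) + (x + 1) = 2 by ring.
by rewrite ger0_norm.
Qed.

Lemma exists_curve_sum_dtw_ge n (P : 'I_n -> curve R d.+1 m) :
  exists2 psi : curve R d.+1 m, in_unit_ball psi & m%:R * n%:R <= \sum_i dtw (P i) psi.
Proof.
have const_in_unit_ball (v : 'rV[R]_d.+1) : enorm v = 1 -> in_unit_ball (fun _ : 'I_m => v).
  by move=> v1 k; rewrite v1.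
have : \sum_(i < n) (2 * m%:R) <= \sum_i (dtw (P i) (fun _ : 'I_m => unit_row) +
    dtw (P i) (fun _ : 'I_m => - unit_row)).
  by apply: ler_sum => i _; exact: dtw_const_unit_row_ge.
rewrite big_split /= sumr_const card_ord.
have [ge|lt] := lerP (m%:R * n%:R) (\sum_i dtw (P i) (fun _ : 'I_m => unit_row)) => sum2.
  by exists (fun _ : 'I_m => unit_row) => //; apply: const_in_unit_ball; exact: enorm_unit_row.
exists (fun _ : 'I_m => - unit_row); first by apply: const_in_unit_ball; rewrite enormN enorm_unit_row.
by move: sum2; rewrite -mulr_natr; lra.
Qed.

End median_witness.

Section complexity_lower_bounds.
Context (R : realType) (d m n : nat) (P : 'I_n -> curve R d m).
Hypotheses (m_gt0 : (0 < m)%N) (P1 : forall i, in_unit_ball (P i)).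

Lemma zero_curve_in_unit_ball : in_unit_ball (fun _ : 'I_m => 0 : 'rV[R]_d).
Proof. by move=> k; rewrite /enorm big1 ?sqrtr0 // => i _; rewrite mxE expr0n. Qed.

Lemma dev_le_sum_abs (r : 'I_n -> R) (psi : curve R d m) : in_unit_ball psi ->
  `|(n%:R)^-1 * \sum_i dtw (P i) psi * r i| <= (n%:R)^-1 * \sum_i 2 * m%:R * `|r i|.
Proof.
move=> psi1; rewrite normrM ger0_norm ?invr_ge0 // ler_wpM2l ?invr_ge0 //.
apply: le_trans (ler_norm_sum _ _ _) _; apply: ler_sum => i _.
by rewrite normrM ger0_norm ?dtw_ge0 // ler_wpM2r // dtw_le.
Qed.

Lemma sup_dev_ge (r : 'I_n -> R) (psi : curve R d m) : in_unit_ball psi ->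
  `|(n%:R)^-1 * \sum_i dtw (P i) psi * r i| <= sup_dev P r.
Proof.
move=> psi1; apply: ub_le_sup; last by exists psi.
by exists ((n%:R)^-1 * \sum_i 2 * m%:R * `|r i|) => _ [phi phi1 <-]; exact: dev_le_sum_abs.
Qed.

Lemma sup_dev_le (r : 'I_n -> R) : sup_dev P r <= (n%:R)^-1 * \sum_i 2 * m%:R * `|r i|.
Proof.
apply: ge_sup; first by eexists; exists (fun _ : 'I_m => 0); first exact: zero_curve_in_unit_ball.
by move=> _ [phi phi1 <-]; exact: dev_le_sum_abs.
Qed.

Lemma sup_dev_ge0 (r : 'I_n -> R) : 0 <= sup_dev P r.
Proof. exact: le_trans (normr_ge0 _) (sup_dev_ge r zero_curve_in_unit_ball). Qed.

Lemma rademacher_sign_expect :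
  rademacher P = sign_expect n (fun g => sup_dev P (fun i => g (val i))).
Proof.
rewrite sign_expectE /rademacher; congr (_ * _); apply: eq_bigr => b _.
by congr sup_dev; apply/funext => i; rewrite /sign_ext nat_extE.
Qed.

Variable psi : curve R d m.
Hypothesis psi1 : in_unit_ball psi.
Let a := nat_ext (fun i => dtw (P i) psi).

Let sum_a_sqr : \sum_(i < n) a i ^+ 2 = \sum_i dtw (P i) psi ^+ 2.
Proof. by apply: eq_bigr => i _; rewrite /a nat_extE. Qed.

Let sup_dev_ge_sum (g : nat -> R) :
  (n%:R)^-1 * `|\sum_(i < n) a i * g i| <= sup_dev P (fun i => g (val i)).
Proof.
apply: le_trans (sup_dev_ge _ psi1); rewrite normrM ger0_norm ?invr_ge0 //.
by under eq_bigr do rewrite /a nat_extE.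
Qed.

Lemma rademacher_ge : 0 < \sum_i dtw (P i) psi ^+ 2 ->
  (n%:R)^-1 * Num.sqrt (\sum_i dtw (P i) psi ^+ 2) * (9 / 16) <= rademacher P.
Proof.
rewrite -sum_a_sqr rademacher_sign_expect => S_gt0.
by apply: (sign_expect_abs_ge _ S_gt0 sup_dev_ge_sum); rewrite invr_ge0.
Qed.

Lemma gaussian_ge : 0 < \sum_i dtw (P i) psi ^+ 2 ->
  (n%:R)^-1 * Num.sqrt (\sum_i dtw (P i) psi ^+ 2) * (1 - 1 / Num.sqrt 2) <= gaussian P.
Proof.
rewrite -sum_a_sqr /gaussian => S_gt0.
(* exp(x^2/4) is a Gaussian-integrable majorant of |x|, hence (linearly) of
   sup_dev, as [le_gauss_expect] requires. *)
pose u := exp_sqr (- (1 / 4)) 1 (0 : R).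
have u_ge x : `|x| <= u x.
  rewrite /u /exp_sqr add0r !mul1r opprK; apply: le_trans (expR_ge1Dx _).
  rewrite -[x ^+ 2]real_normK ?num_real //; have := sqr_ge0 (`|x| - 2); nra.
have intu : (normal_prob 0 1).-integrable setT (EFin \o u).
  by apply: integrable_exp_sqr; rewrite expr1n mulr1; lra.
apply: (gauss_expect_abs_ge intu (c := fun _ => (n%:R)^-1 * (2 * m%:R)) (al := 0) _ S_gt0)
  _ _ _ sup_dev_ge_sum => //.
- by move=> g; exact: sup_dev_ge0.
- move=> g; apply: le_trans (sup_dev_le _) _; rewrite add0r mulr_sumr ler_sum // => i _.
  by rewrite !mulrA ler_wpM2l ?mulr_ge0 ?invr_ge0.
Qed.

End complexity_lower_bounds.

Theorem proposition4p2 (R : realType) :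
  exists c : R, 0 < c /\
    forall (d m n : nat), (0 < d)%N -> (0 < m)%N -> (0 < n)%N ->
    forall P : 'I_n -> curve R d m, (forall i, in_unit_ball (P i)) ->
      c * Num.sqrt ((m%:R) ^+ 2 / n%:R) <= rademacher P /\
      c * Num.sqrt ((m%:R) ^+ 2 / n%:R) <= gaussian P.
Proof.
exists (1 / 4); split => [|[//|d] m n _ m_gt0 n_gt0 P P1]; first lra.
have [psi psi1 sum_ge] := exists_curve_sum_dtw_ge m_gt0 P.
have S_ge := sum_sqr_ge (ler0n _ m) sum_ge.
have S_gt0 : 0 < \sum_i dtw (P i) psi ^+ 2.
  by apply: lt_le_trans S_ge; rewrite mulr_gt0 ?exprn_gt0 ?ltr0n.
split.
- apply: le_trans (rademacher_ge m_gt0 P1 psi1 S_gt0).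
  by apply: sqrt_ratio_le => //; lra.
- apply: le_trans (gaussian_ge m_gt0 P1 psi1 S_gt0).
  exact: sqrt_ratio_le (one_sub_inv_sqrt2_ge R).
Qed.
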